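(* For every $\epsilon\in(0,1)$ there is an instance consisting of $E=\{e_1,e_2,e_3\}$, $O=\{o_1,o_2\}$, a prior $p$ whose support is $U^+=\{\phi_1,\phi_2,\phi_3\}$ with $\phi_i(e_i)=o_1$ and $\phi_i(e_j)=o_2$ for $j\ne i$, and the utility $f(S,\phi)=\epsilon\cdot\mathbf 1[e_1\in S]+\sum_{i\in\{2,3\}}\mathbf 1[e_i\in S]\,\mathbf 1[\phi(e_i)=o_2]$, such that: $f$ is pointwise monotone and pointwise submodular, worst-case monotone, and satisfies minimal dependency; yet for cardinality $k=2$ the adaptive worst-case greedy policy $\pi^g$ (with any tie-breaking) satisfies $f_{wc}(\pi^g)=\epsilon$, while $f_{wc}(\pi^*_{wc})=1$ for an optimal policy $\pi^*_{wc}$ among policies selecting at most $2$ items. In particular, pointwise submodularity together with worst-case monotonicity and minimal dependency does not imply worst-case submodularity, and under these hypotheses the approximation ratio of $\pi^g$ can be arbitrarily close to $0$.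
   Context: Setting. $E$ is a finite set of items, $O$ a finite set of states, a realization is $\phi:E\to O$, $p$ a prior on realizations, $\Phi\sim p$, $U^+=\{\phi:p(\phi)>0\}$. A partial realization is $\psi:S\to O$, $S=\mathrm{dom}(\psi)\subseteq E$, identified with its set of pairs; $\phi\sim\psi$ means $\phi$ agrees with $\psi$ on $\mathrm{dom}(\psi)$; only $\psi$ with $\Pr[\Phi\sim\psi]>0$ are considered and $p(\phi\mid\psi)=\Pr[\Phi=\phi\mid\Phi\sim\psi]$. $f(S,\psi)=\mathbb{E}[f(S,\Phi)\mid\Phi\sim\psi]$. For $e\notin\mathrm{dom}(\psi)$, $O(e,\psi)=\{o:\exists\phi,\ p(\phi\mid\psi)>0,\ \phi(e)=o\}$ and $f_{wc}(e\mid\psi)=\min_{o\in O(e,\psi)}\{f(\mathrm{dom}(\psi)\cup\{e\},\psi\cup\{(e,o)\})-f(\mathrm{dom}(\psi),\psi)\}$. $f$ is worst-case submodular if $f_{wc}(e\mid\psi)\ge f_{wc}(e\mid\psi')$ for all $\psi\subseteq\psi'$ and $e\notin\mathrm{dom}(\psi')$; worst-case monotone if $f_{wc}(e\mid\psi)\ge0$ always. $f$ satisfies minimal dependency if $f(\mathrm{dom}(\psi),\psi)=f(\mathrm{dom}(\psi),\phi)$ for all $\psi$ and $\phi\in U^+$ with $\phi\sim\psi$. $f$ is pointwise submodular (resp. pointwise monotone) if for each $\phi\in U^+$ the set function $S\mapsto f(S,\phi)$ is submodular (resp. monotone nondecreasing). A (deterministic) policy, given the current observed partial realization, selects a new item or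 stops; $E(\pi,\phi)$ is the set it selects under $\phi$, and $f_{wc}(\pi)=\min_{\phi\in U^+}f(E(\pi,\phi),\phi)$. The adaptive worst-case greedy policy $\pi^g$ for cardinality $k$: with $\psi_0=\emptyset$, for $t=1,\dots,k$ select $e_t\in\arg\max_{e\in E\setminus\mathrm{dom}(\psi_{t-1})}f_{wc}(e\mid\psi_{t-1})$, observe its state and set $\psi_t=\psi_{t-1}\cup\{(e_t,\Phi(e_t))\}$. $\pi^*_{wc}$ maximizes $f_{wc}(\pi)$ over policies with $|E(\pi,\phi)|\le k$ for all $\phi\in U^+$. *)

From HB Require Import structures.
From mathcomp Require Import all_boot all_order all_algebra.
Set Implicit Arguments. Unset Strict Implicit. Unset Printing Implicit Defensive.
Import Order.TTheory GRing.Theory Num.Theory.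
Local Open Scope ring_scope.

Section General.
Variables (E O : finType) (R : realFieldType).

Definition realization := {ffun E -> O}.
(** partial realizations psi : S -> O, encoded as E -> option O with
    dom psi = { e | psi e <> None } *)
Definition prealization := {ffun E -> option O}.

Definition dom (psi : prealization) : {set E} := [set e | psi e != None].
Definition empty_pr : prealization := [ffun _ => None].
Definition ext (psi : prealization) (e : E) (o : O) : prealization :=
  [ffun x => if x == e then Some o else psi x].
Definition agrees (phi : realization) (psi : prealization) : bool :=
  [forall e, if psi e is Some o then phi e == o else true].
Definition subpr (psi psi' : prealization) : Prop :=
  forall e o, psi e = Some o -> psi' e = Some o.

Variable p : realization -> R.
Variable f : {set E} -> realization -> R.

Definition Usupp (phi : realization) : bool := 0 < p phi.
Definition prior_ok : Prop := (forall phi, 0 <= p phi) /\ \sum_phi p phi = 1.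

Definition PrC (psi : prealization) : R := \sum_(phi | agrees phi psi) p phi.
Definition pcond (phi : realization) (psi : prealization) : R :=
  if agrees phi psi then p phi / PrC psi else 0.
Definition fexp (S : {set E}) (psi : prealization) : R :=
  \sum_phi pcond phi psi * f S phi.

Definition minr_seq (s : seq R) : R := \big[Order.min/head 0 s]_(x <- s) x.

Definition Oset (e : E) (psi : prealization) : {set O} :=
  [set o | [exists phi, (0 < pcond phi psi) && (phi e == o)]].

Definition fwc (e : E) (psi : prealization) : R :=
  minr_seq [seq fexp (e |: dom psi) (ext psi e o) - fexp (dom psi) psi
           | o <- enum (Oset e psi)].

Definition wc_submodular : Prop :=
  forall psi psi' e, 0 < PrC psi -> 0 < PrC psi' -> subpr psi psi' ->
    e \notin dom psi' -> fwc e psi' <= fwc e psi.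
Definition wc_monotone : Prop :=
  forall psi e, 0 < PrC psi -> e \notin dom psi -> 0 <= fwc e psi.
Definition min_dependency : Prop :=
  forall psi phi, 0 < PrC psi -> Usupp phi -> agrees phi psi ->
    fexp (dom psi) psi = f (dom psi) phi.
Definition pw_submodular : Prop :=
  forall phi, Usupp phi -> forall (S T : {set E}) e, S \subset T -> e \notin T ->
    f (e |: T) phi - f T phi <= f (e |: S) phi - f S phi.
Definition pw_monotone : Prop :=
  forall phi, Usupp phi -> forall (S T : {set E}), S \subset T -> f S phi <= f T phi.

(** Deterministic policies: given the observed partial realization, select an
    item (Some e) or stop (None).  Selecting an already observed item is
    treated as stopping. *)
Definition policy := prealization -> option E.

Definition step (pi : policy) (phi : realization) (psi : prealization)
  : prealization :=
  match pi psi with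
  | Some e => if e \in dom psi then psi else ext psi e (phi e)
  | None => psi
  end.
(** at most #|E| items can be selected, so #|E| steps reach the final state *)
Definition run (pi : policy) (phi : realization) : prealization :=
  iter #|E| (step pi phi) empty_pr.
Definition Epol (pi : policy) (phi : realization) : {set E} := dom (run pi phi).

Definition fwc_pol (pi : policy) : R :=
  minr_seq [seq f (Epol pi phi) phi | phi <- enum Usupp].

Definition bounded (k : nat) (pi : policy) : Prop :=
  forall phi, Usupp phi -> (#|Epol pi phi| <= k)%N.

Definition is_greedy (k : nat) (pi : policy) : Prop :=
  forall psi, 0 < PrC psi ->
    if (#|dom psi| < k)%N && (dom psi != setT) then
      exists e, [/\ pi psi = Some e, e \notin dom psi &
                 forall e', e' \notin dom psi -> fwc e' psi <= fwc e psi]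
    else pi psi = None.

End General.

Definition Eit := 'I_3.
Definition Ost := 'I_2.
Definition e1 : Eit := inord 0.
Definition e2 : Eit := inord 1.
Definition e3 : Eit := inord 2.
Definition o1 : Ost := inord 0.
Definition o2 : Ost := inord 1.

Definition phi_i (i : Eit) : {ffun Eit -> Ost} :=
  [ffun j => if j == i then o1 else o2].

Definition util (R : realFieldType) (eps : R) (S : {set Eit})
    (phi : {ffun Eit -> Ost}) : R :=
  eps * (e1 \in S)%:R
  + \sum_(i <- [:: e2; e3]) ((i \in S)%:R * (phi i == o2)%:R).

From HB Require Import structures.
From mathcomp Require Import all_boot all_order all_algebra.
From mathcomp Require Import ring lra.
Import Order.TTheory GRing.Theory Num.Theory.
Local Open Scope ring_scope.
Set Implicit Arguments. Unset Strict Implicit. Unset Printing Implicit Defensive.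

(** On three items and the prior uniform on [phi_i e1], [phi_i e2], [phi_i e3],
    the utility [util eps] is known once the states of the selected items are
    known ([util_observed]), so every conditional expectation [f(S, psi)] is a
    pointwise value ([fexp_util]) and the worst-case marginal gains have a closed
    form ([fwcE]): [eps] for [e1]; for [e2] or [e3], [0] as long as the
    realization in which it is in state [o1] is still possible, [1] afterwards.
    This yields the four structural properties, and the failure of worst-case
    submodularity (observing [e2] in state [o1] raises the gain of [e3]).
    Greedy first takes [e1] (gain [eps] against [0]) and then one item [e'] of
    [{e2, e3}]; under [phi_i e'] it collects only [eps].  Selecting [e2] and [e3]
    collects [1] under every realization, and no 2-bounded policy does better:
    its runs under [phi_i e2] and [phi_i e3] coincide until [e2] or [e3] is
    selected, and the realization in which that item is in state [o1] then
    yields at most [1]. *)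

Section MinSeq.
Variable R : realFieldType.

Lemma minr_seq_le (s : seq R) x : x \in s -> minr_seq s <= x.
Proof.
rewrite /minr_seq; move: (head 0 s) => idx.
elim: s => //= a s IH; rewrite inE big_cons ge_min.
by case/orP => [/eqP <-|/IH ->]; rewrite ?lexx ?orbT.
Qed.

Lemma minr_seq_ge (s : seq R) c :
  s != [::] -> (forall y, y \in s -> c <= y) -> c <= minr_seq s.
Proof.
case: s => // a s _ hs; rewrite /minr_seq /=.
have : c <= a by apply: hs; rewrite mem_head.
elim: (a :: s) hs => [|b t IH] hs hc; rewrite ?big_nil ?big_cons //.
rewrite le_min hs ?mem_head //=.
by apply: IH => // y hy; apply: hs; rewrite inE hy orbT.
Qed.

Lemma minr_seq_eq (s : seq R) x :
  x \in s -> (forall y, y \in s -> x <= y) -> minr_seq s = x.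
Proof.
move=> hx hall; apply/le_anti; rewrite minr_seq_le //= minr_seq_ge //.
by case: s hx {hall}.
Qed.

End MinSeq.

Section Adaptive.
Variables (E O : finType) (R : realFieldType).
Implicit Types (phi : realization E O) (psi : prealization E O) (e : E) (o : O).

Lemma dom_empty : dom (empty_pr E O) = set0.
Proof. by apply/setP => x; rewrite /dom !inE ffunE. Qed.

Lemma dom_ext psi e o : dom (ext psi e o) = e |: dom psi.
Proof. by apply/setP => x; rewrite /dom !inE ffunE; case: (x == e). Qed.

Lemma agreesP phi psi e o : agrees phi psi -> psi e = Some o -> phi e = o.
Proof. by move=> /forallP /(_ e) + he; rewrite he => /eqP. Qed.

Lemma agrees_empty phi : agrees phi (empty_pr E O).
Proof. by apply/forallP => x; rewrite ffunE. Qed.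

Lemma agrees_ext phi psi e o :
  agrees phi psi -> phi e = o -> agrees phi (ext psi e o).
Proof.
move=> /forallP h he; apply/forallP => x; rewrite ffunE.
by case: eqP => [->|_]; [rewrite he | apply: h].
Qed.

Variable p : realization E O -> R.
Hypothesis p_ge0 : forall phi, 0 <= p phi.

Lemma PrC_gt0 phi psi : agrees phi psi -> 0 < p phi -> 0 < PrC p psi.
Proof.
move=> hag hp; rewrite /PrC (bigD1 phi) //=.
by rewrite ltr_pwDl // sumr_ge0.
Qed.

Lemma PrC_witness psi : 0 < PrC p psi -> exists2 phi, agrees phi psi & p phi != 0.
Proof.
move=> hP; apply/exists_inP; apply: contraTT hP => /exists_inPn hn.
by rewrite /PrC big1 ?ltxx // => phi /hn /negPn /eqP.
Qed.

Lemma pcond_gt0 phi psi : agrees phi psi -> 0 < p phi -> 0 < pcond p phi psi.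
Proof.
by move=> hag hp; rewrite /pcond hag divr_gt0 // (PrC_gt0 hag).
Qed.

Lemma pcond_gt0_inv phi psi :
  0 < pcond p phi psi -> agrees phi psi /\ p phi != 0.
Proof.
rewrite /pcond; case: ifP => [hag|_]; last by rewrite ltxx.
by move=> h; split=> //; apply: contraTneq h => ->; rewrite mul0r ltxx.
Qed.

Lemma Oset_mem phi psi e : agrees phi psi -> 0 < p phi -> phi e \in Oset p e psi.
Proof.
by move=> hag hp; rewrite inE; apply/existsP; exists phi; rewrite (pcond_gt0 hag hp) eqxx.
Qed.

Lemma Oset_witness psi e o : o \in Oset p e psi ->
  exists phi, [/\ agrees phi psi, p phi != 0 & phi e = o].
Proof.
rewrite inE => /existsP [phi /andP [/pcond_gt0_inv [hag hp] /eqP heo]].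
by exists phi.
Qed.

Variable f : {set E} -> realization E O -> R.

Lemma fexp_const S psi c :
  0 < PrC p psi -> (forall phi, agrees phi psi -> f S phi = c) -> fexp p f S psi = c.
Proof.
move=> hP hc; rewrite /fexp.
transitivity (\sum_phi pcond p phi psi * c).
  apply: eq_bigr => phi _; rewrite /pcond.
  by case: ifP => [/hc -> //|_]; rewrite !mul0r.
rewrite -mulr_suml /pcond -big_mkcond /= -mulr_suml.
by rewrite -/(PrC p psi) divff ?mul1r // gt_eqF.
Qed.

Definition gain e psi o : R :=
  fexp p f (e |: dom psi) (ext psi e o) - fexp p f (dom psi) psi.

Lemma fwc_eq e psi c :
  (exists2 o, o \in Oset p e psi & gain e psi o = c) ->
  (forall o, o \in Oset p e psi -> c <= gain e psi o) -> fwc p f e psi = c.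
Proof.
move=> [o ho <-] hmin; apply: minr_seq_eq; first by apply: map_f; rewrite mem_enum.
by move=> _ /mapP [o' + ->]; rewrite mem_enum; apply: hmin.
Qed.

Lemma fwc_pol_le pi phi : Usupp p phi -> fwc_pol p f pi <= f (Epol pi phi) phi.
Proof. by move=> hphi; apply: minr_seq_le; apply: map_f; rewrite mem_enum. Qed.

Lemma fwc_pol_eq pi phi c : Usupp p phi -> f (Epol pi phi) phi = c ->
  (forall phi', Usupp p phi' -> c <= f (Epol pi phi') phi') -> fwc_pol p f pi = c.
Proof.
move=> hphi <- hmin; apply: minr_seq_eq; first by apply: map_f; rewrite mem_enum.
by move=> _ /mapP [phi' + ->]; rewrite mem_enum; apply: hmin.
Qed.

Lemma step_stop pi phi psi : pi psi = None -> step pi phi psi = psi.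
Proof. by rewrite /step => ->. Qed.

Lemma dom_step pi phi psi : dom psi \subset dom (step pi phi psi).
Proof.
rewrite /step; case: (pi psi) => [e|]; last exact: subxx.
by case: ifP => _; rewrite ?subxx // dom_ext subsetUr.
Qed.

Lemma dom_iter pi phi psi n : dom psi \subset dom (iter n (step pi phi) psi).
Proof. by elim: n => [|n IH] //=; apply: subset_trans IH (dom_step _ _ _). Qed.

Lemma first_choice_in pi phi e :
  pi (empty_pr E O) = Some e -> e \in Epol pi phi.
Proof.
move=> h0; have he : (0 < #|E|)%N by apply/card_gt0P; exists e.
rewrite /Epol /run -(prednK he) iterSr.
have -> : step pi phi (empty_pr E O) = ext (empty_pr E O) e (phi e).
  by rewrite /step h0 dom_empty inE.
by apply: (subsetP (dom_iter _ _ _ _)); rewrite dom_ext setU11.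
Qed.

Definition greedy_pol (k : nat) : policy E O := fun psi =>
  if (#|dom psi| < k)%N && (dom psi != setT) then
    [pick e | (e \notin dom psi) &&
       [forall e', (e' \notin dom psi) ==> (fwc p f e' psi <= fwc p f e psi)]]
  else None.

Lemma greedy_polP k : is_greedy p f k (greedy_pol k).
Proof.
move=> psi _; rewrite /greedy_pol; case hc: (_ && _) => //; case/andP: hc => _ hT.
case: pickP => [e /andP [he /forall_inP hm]|hn].
  by exists e; split => // e' /hm.
have [e0 he0] : exists e0, e0 \notin dom psi.
  case: (pickP (fun e => e \notin dom psi)) => [e0 he0|h0]; first by exists e0.
  by case/eqP: hT; apply/setP => x; rewrite in_setT; move: (h0 x) => /negbFE.
case: (@arg_maxP _ R E e0 (fun e => e \notin dom psi) (fun e => fwc p f e psi) he0).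
move=> m hm hmax; move/negbT: (hn m); rewrite hm /=.
by case/forall_inPn => e' he' /negP hnot; exfalso; apply/hnot/hmax.
Qed.

End Adaptive.

Lemma Eit_vals : [/\ nat_of_ord e1 = 0, nat_of_ord e2 = 1 & nat_of_ord e3 = 2]%N.
Proof. by rewrite /e1 /e2 /e3 !inordK. Qed.

Lemma Ost_vals : nat_of_ord o1 = 0%N /\ nat_of_ord o2 = 1%N.
Proof. by rewrite /o1 /o2 !inordK. Qed.

Lemma e12 : (e1 == e2) = false.
Proof. by case: Eit_vals => h1 h2 _; rewrite -val_eqE /= h1 h2. Qed.

Lemma e13 : (e1 == e3) = false.
Proof. by case: Eit_vals => h1 _ h3; rewrite -val_eqE /= h1 h3. Qed.

Lemma e23 : (e2 == e3) = false.
Proof. by case: Eit_vals => _ h2 h3; rewrite -val_eqE /= h2 h3. Qed.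

Lemma o12 : (o1 == o2) = false.
Proof. by case: Ost_vals => h1 h2; rewrite -val_eqE /= h1 h2. Qed.

Definition eqE := (e12, e13, e23, etrans (eq_sym e2 e1) e12,
  etrans (eq_sym e3 e1) e13, etrans (eq_sym e3 e2) e23, o12,
  etrans (eq_sym o2 o1) o12, eqxx).

Lemma Eit_cases (x : Eit) : [\/ x = e1, x = e2 | x = e3].
Proof.
case: Eit_vals => h1 h2 h3; case: x => [[|[|[|m]]] Hm] //.
- by apply: Or31; apply: val_inj; rewrite /= h1.
- by apply: Or32; apply: val_inj; rewrite /= h2.
- by apply: Or33; apply: val_inj; rewrite /= h3.
Qed.

Lemma Ost_cases (x : Ost) : x = o1 \/ x = o2.
Proof.
case: Ost_vals => h1 h2; case: x => [[|[|m]] Hm] //.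
- by left; apply: val_inj; rewrite /= h1.
- by right; apply: val_inj; rewrite /= h2.
Qed.

Lemma phiE i j : phi_i i j = if j == i then o1 else o2.
Proof. by rewrite ffunE. Qed.

Definition supp := [:: phi_i e1; phi_i e2; phi_i e3].

Lemma phi_in_supp i : phi_i i \in supp.
Proof. by case: (Eit_cases i) => ->; rewrite !inE eqxx ?orbT. Qed.

Lemma uniq_supp : uniq supp.
Proof.
have phi_inj i j : phi_i i = phi_i j -> i = j.
  move/(congr1 (fun phi : {ffun Eit -> Ost} => phi i)); rewrite !phiE eqxx.
  by case: eqP => // _ /eqP; rewrite eqE.
by rewrite /= !inE !andbT -!negb_or; apply/norP; split; [apply/norP; split|];
  apply/eqP => /phi_inj /eqP; rewrite eqE.
Qed.

Lemma supp_o1 phi e : phi \in supp -> phi e = o1 -> phi = phi_i e.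
Proof.
rewrite !inE => /or3P [] /eqP ->; rewrite phiE; case: eqP => [->//|_].
all: by move/eqP; rewrite eqE.
Qed.

Definition pr (R : realFieldType) (phi : {ffun Eit -> Ost}) : R :=
  if phi \in supp then 3^-1 else 0.

Section Instance.
Variables (R : realFieldType) (eps : R).
Hypothesis eps_bounds : 0 < eps < 1.
Implicit Types (S : {set Eit}) (e : Eit) (o : Ost) (phi : realization Eit Ost)
  (psi : prealization Eit Ost).

Local Notation f := (util eps).
Local Notation p := (pr R).

Lemma pr_ge0 phi : 0 <= p phi.
Proof. by rewrite /pr; case: ifP => // _; rewrite invr_ge0 ler0n. Qed.

Lemma pr_gt0 phi : (0 < p phi) = (phi \in supp).
Proof. by rewrite /pr; case: ifP => _; rewrite ?ltxx // invr_gt0 ltr0n. Qed.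

Lemma pr_neq0 phi : (p phi != 0) = (phi \in supp).
Proof. by rewrite -pr_gt0 lt_def pr_ge0 andbT. Qed.

Lemma Usupp_pr phi : Usupp p phi = (phi \in supp).
Proof. exact: pr_gt0. Qed.

Lemma pr_prior : prior_ok p.
Proof.
split; first exact: pr_ge0.
rewrite /pr -big_mkcond /= -(big_uniq _ uniq_supp) /supp !big_cons big_nil.
have h3 : (3 : R) != 0 by rewrite pnatr_eq0.
by change (3^-1 + (3^-1 + (3^-1 + 0)) = 1 :> R); field.
Qed.

Lemma PrC_empty : 0 < PrC p (empty_pr Eit Ost).
Proof.
by apply: (PrC_gt0 pr_ge0 (agrees_empty (phi_i e1))); rewrite pr_gt0 phi_in_supp.
Qed.

Lemma util_eq S phi : f S phi =
  eps * (e1 \in S)%:R + (e2 \in S)%:R * (phi e2 == o2)%:R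
  + (e3 \in S)%:R * (phi e3 == o2)%:R.
Proof. by rewrite /util !big_cons big_nil addr0 addrA. Qed.

Lemma util_gain S e phi : e \notin S ->
  f (e |: S) phi - f S phi = if e == e1 then eps else (phi e == o2)%:R.
Proof.
move=> heS; rewrite !util_eq !inE.
by case: (Eit_cases e) heS => -> /negbTE hS; rewrite ?eqE ?hS /=; ring.
Qed.

Lemma util_ge_eps S phi : e1 \in S -> eps <= f S phi.
Proof.
move=> h; rewrite util_eq h mulr1 -addrA lerDl.
by rewrite addr_ge0 // mulr_ge0 // ler0n.
Qed.

Lemma util_observed psi phi phi' : agrees phi psi -> agrees phi' psi ->
  f (dom psi) phi = f (dom psi) phi'.
Proof.
move=> h h'; have same x : (x \in dom psi)%:R * (phi x == o2)%:R =
                            (x \in dom psi)%:R * (phi' x == o2)%:R :> R.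
  rewrite /dom inE; case hx: (psi x) => [o|] /=; last by rewrite !mul0r.
  by rewrite (agreesP h hx) (agreesP h' hx).
by rewrite !util_eq !same.
Qed.

Lemma fexp_util psi phi : 0 < PrC p psi -> agrees phi psi ->
  fexp p f (dom psi) psi = f (dom psi) phi.
Proof. by move=> hP hag; apply: fexp_const => // phi' /(util_observed hag). Qed.

Lemma gain_util psi e o : e \notin dom psi -> o \in Oset p e psi ->
  gain p f e psi o = if e == e1 then eps else (o == o2)%:R.
Proof.
move=> he /Oset_witness [phi [hag hp heo]].
have hag' : agrees phi (ext psi e o) := agrees_ext hag heo.
have hpos : 0 < p phi by rewrite pr_gt0 -pr_neq0.
rewrite /gain -(dom_ext psi e o) (fexp_util (PrC_gt0 pr_ge0 hag' hpos) hag').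
by rewrite (fexp_util (PrC_gt0 pr_ge0 hag hpos) hag) dom_ext util_gain // heo.
Qed.

Lemma fwcE psi e : 0 < PrC p psi -> e \notin dom psi ->
  fwc p f e psi = if e == e1 then eps else if agrees (phi_i e) psi then 0 else 1.
Proof.
move=> hP he; have [phi0 hag0 hp0] := PrC_witness hP.
have hO0 : phi0 e \in Oset p e psi.
  by apply: (Oset_mem pr_ge0 e hag0); rewrite pr_gt0 -pr_neq0.
have gainE := gain_util he.
case: ifP => he1.
  apply: fwc_eq => [|o /gainE ->]; last by rewrite he1.
  by exists (phi0 e); rewrite // gainE // he1.
case: ifP => hag.
  have hO1 : o1 \in Oset p e psi.
    have hpos : 0 < p (phi_i e) by rewrite pr_gt0 phi_in_supp.
    by have := Oset_mem pr_ge0 e hag hpos; rewrite phiE eqxx.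
  apply: fwc_eq => [|o /gainE ->]; last by rewrite he1 ler0n.
  by exists o1; rewrite // gainE // he1 eqE.
have only_o2 o : o \in Oset p e psi -> o = o2.
  case/Oset_witness=> phi [hag' hp heo]; case: (Ost_cases o) => // ho.
  by move: hag; rewrite -(supp_o1 _ (etrans heo ho)) -?pr_neq0 ?hag'.
apply: fwc_eq => [|o ho]; last by rewrite gainE // he1 (only_o2 _ ho) eqxx.
by exists (phi0 e); rewrite // gainE // he1 (only_o2 _ hO0) eqxx.
Qed.

Lemma util_pw_monotone : pw_monotone p f.
Proof.
move=> phi _ S T /subsetP hST; rewrite !util_eq.
have memST x : ((x \in S)%:R : R) <= (x \in T)%:R.
  by case: (boolP (x \in S)) => [/hST ->|_]; rewrite ?lexx ?ler0n.
have eps_ge0 : 0 <= eps by case/andP: eps_bounds => /ltW.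
by rewrite !lerD ?ler_wpM2l ?ler_wpM2r ?ler0n.
Qed.

(** The marginal gain of an item does not depend on the current set at all. *)
Lemma util_pw_submodular : pw_submodular p f.
Proof.
move=> phi _ S T e /subsetP hST heT; have heS : e \notin S by apply: contra heT => /hST.
by rewrite !util_gain.
Qed.

Lemma util_wc_monotone : wc_monotone p f.
Proof.
move=> psi e hP he; rewrite fwcE //.
by case: ifP => _; [case/andP: eps_bounds => /ltW | case: ifP].
Qed.

Lemma util_min_dependency : min_dependency p f.
Proof. by move=> psi phi hP _ hag; apply: fexp_util. Qed.

(** Observing [e2] in state [o1] rules out [phi_i e3], which raises the
    worst-case gain of [e3] from [0] to [1]. *)
Lemma util_not_wc_submodular : ~ wc_submodular p f.
Proof.
move=> wc_sub; set psi := ext (empty_pr Eit Ost) e2 o1.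
have hag : agrees (phi_i e2) psi by apply: agrees_ext; rewrite ?agrees_empty ?phiE ?eqxx.
have hP : 0 < PrC p psi by apply: (PrC_gt0 pr_ge0 hag); rewrite pr_gt0 phi_in_supp.
have hsub : subpr (empty_pr Eit Ost) psi by move=> x o; rewrite ffunE.
have he3 : e3 \notin dom psi by rewrite dom_ext dom_empty !inE eqE.
have := wc_sub _ _ e3 PrC_empty hP hsub he3.
rewrite (fwcE hP he3) fwcE ?PrC_empty ?dom_empty ?inE // eqE agrees_empty.
have -> : agrees (phi_i e3) psi = false.
  have psi_e2 : psi e2 = Some o1 by rewrite ffunE eqxx.
  by apply/negP => /agreesP /(_ psi_e2); rewrite phiE eqE => /eqP; rewrite eqE.
by rewrite ler10.
Qed.

Lemma run3 pi phi : run pi phi = iter 3 (step pi phi) (empty_pr Eit Ost).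
Proof. by rewrite /run card_ord. Qed.

(** Every greedy policy first selects [e1] (worst-case gain [eps] against [0]),
    then some [e'] in [{e2, e3}] and stops; under [phi_i e'] it collects [eps]. *)
Section Greedy.
Variable pi : policy Eit Ost.
Hypothesis pi_greedy : is_greedy p f 2 pi.

Lemma greedy_first : pi (empty_pr Eit Ost) = Some e1.
Proof.
have := pi_greedy PrC_empty; rewrite dom_empty cards0 /=.
have -> : (set0 : {set Eit}) != setT by apply/eqP/setP => /(_ e1); rewrite !inE.
case=> e [-> _ emax]; case: (eqVneq e e1) => [-> //|ne1].
have := emax e1; rewrite !fwcE ?PrC_empty ?dom_empty ?inE // eqxx (negbTE ne1).
by rewrite agrees_empty => /(_ isT); case/andP: eps_bounds => /lt_geF ->.
Qed.

Lemma greedy_value : fwc_pol p f pi = eps.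
Proof.
set psi1 := ext (empty_pr Eit Ost) e1 o2.
have dom1 : dom psi1 = [set e1] by rewrite dom_ext dom_empty setU0.
have hP1 : 0 < PrC p psi1.
  apply: (PrC_gt0 pr_ge0 (phi := phi_i e2)); last by rewrite pr_gt0 phi_in_supp.
  by apply: agrees_ext; rewrite ?agrees_empty // phiE eqE.
have notT1 : [set e1] != setT by apply/eqP/setP => /(_ e2); rewrite !inE eqE.
have := pi_greedy hP1; rewrite dom1 cards1 notT1 /= => -[e' [pi1 he' _]].
have ne1 : (e' == e1) = false by apply/negbTE; rewrite inE in he'.
set phi := phi_i e'; set psi2 := ext psi1 e' o1.
have hag2 : agrees phi psi2.
  apply: agrees_ext; last by rewrite /phi phiE eqxx.
  by apply: agrees_ext; rewrite ?agrees_empty // /phi phiE eq_sym ne1.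
have dom2 : dom psi2 = e' |: [set e1] by rewrite dom_ext dom1.
have hpos : 0 < p phi by rewrite pr_gt0 phi_in_supp.
have pi2 : pi psi2 = None.
  have := pi_greedy (PrC_gt0 pr_ge0 hag2 hpos).
  by rewrite dom2 cardsU1 cards1 inE ne1.
have step1 : step pi phi (empty_pr Eit Ost) = psi1.
  by rewrite /step greedy_first dom_empty inE /phi phiE eq_sym ne1.
have step2 : step pi phi psi1 = psi2.
  by rewrite /step pi1 dom1 (negbTE he') /phi phiE eqxx.
have run_phi : run pi phi = psi2 by rewrite run3 /= step1 step2 step_stop.
apply: (fwc_pol_eq (phi := phi)); first by rewrite Usupp_pr phi_in_supp.
  rewrite /Epol run_phi dom2 util_eq !inE /phi !phiE.
  by case: (Eit_cases e') ne1 => -> //; rewrite !eqE /= => _; ring.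
by move=> phi' _; apply/util_ge_eps/first_choice_in/greedy_first.
Qed.

End Greedy.

Definition e2e3_pol : policy Eit Ost := fun psi =>
  if e2 \notin dom psi then Some e2 else if e3 \notin dom psi then Some e3 else None.

Lemma e2e3_Epol phi : Epol e2e3_pol phi = [set e2; e3].
Proof.
set psi1 := ext (empty_pr Eit Ost) e2 (phi e2); set psi2 := ext psi1 e3 (phi e3).
have dom1 : dom psi1 = [set e2] by rewrite dom_ext dom_empty setU0.
have dom2 : dom psi2 = [set e2; e3].
  by rewrite dom_ext dom1; apply/setP => x; rewrite !inE orbC.
have step1 : step e2e3_pol phi (empty_pr Eit Ost) = psi1.
  by rewrite /step /e2e3_pol /= dom_empty in_set0 /= in_set0.
have step2 : step e2e3_pol phi psi1 = psi2.
  by rewrite /step /e2e3_pol /= dom1 !inE !eqE /= inE eqE.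
have stop2 : e2e3_pol psi2 = None by rewrite /e2e3_pol /= dom2 !inE !eqxx orbT.
by rewrite /Epol run3 /= step1 step2 step_stop.
Qed.

Lemma e2e3_bounded : bounded p 2 e2e3_pol.
Proof. by move=> phi _; rewrite e2e3_Epol cards2 eqE. Qed.

Lemma e2e3_value : fwc_pol p f e2e3_pol = 1.
Proof.
apply: (fwc_pol_eq (phi := phi_i e2)); first by rewrite Usupp_pr phi_in_supp.
  by rewrite e2e3_Epol util_eq !inE !phiE !eqE /=; ring.
move=> phi; rewrite Usupp_pr e2e3_Epol util_eq !inE !eqE /=.
by case/or3P => /eqP ->; rewrite !phiE !eqE /=; lra.
Qed.

(** No policy selecting at most two items does better: the runs under
    [phi_i e2] and [phi_i e3] coincide until [e2] or [e3] is selected, and the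
    realization in which that item is in state [o1] then yields at most [1]. *)
Lemma runs_phi2_phi3 pi n :
  let a := iter n (step pi (phi_i e2)) (empty_pr Eit Ost) in
  let b := iter n (step pi (phi_i e3)) (empty_pr Eit Ost) in
  [\/ a = b, e2 \in dom a | e3 \in dom b].
Proof.
elim: n => [|n IH] /=; first exact: Or31.
case: IH => [<-|h2|h3]; last 2 first.
- by apply: Or32; apply: (subsetP (dom_step _ _ _)).
- by apply: Or33; apply: (subsetP (dom_step _ _ _)).
rewrite /step; case: (pi _) => [e|]; last exact: Or31.
case: ifP => _; first exact: Or31.
case: (Eit_cases e) => ->; first by apply: Or31; rewrite !phiE !eqE.
- by apply: Or32; rewrite dom_ext setU11.
- by apply: Or33; rewrite dom_ext setU11.
Qed.

Lemma util_unobserved_le1 S phi : e2 \notin S -> e3 \notin S -> f S phi <= 1.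
Proof.
move=> /negbTE h2 /negbTE h3; rewrite util_eq h2 h3 !mul0r !addr0.
by case/andP: eps_bounds => ? ?; case: (e1 \in S) => /=; lra.
Qed.

Lemma util_own_le1 i S : i != e1 -> i \in S -> (#|S| <= 2)%N -> f S (phi_i i) <= 1.
Proof.
move=> ne1 hi hS; have full : ~ [/\ e1 \in S, e2 \in S & e3 \in S].
  case=> h1 h2 h3; move: hS; have -> : S = setT.
    by apply/setP => x; rewrite in_setT; case: (Eit_cases x) => ->.
  by rewrite cardsT card_ord.
rewrite util_eq !phiE; case/andP: eps_bounds => eps_gt0 eps_lt1.
case: (Eit_cases i) ne1 hi => -> ne1 hi; first by rewrite eqxx in ne1.
all: rewrite hi !eqE /=.
- have : ~~ ((e1 \in S) && (e3 \in S)) by apply/negP => /andP [h1 h3]; apply: full.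
  by case: (e1 \in S); case: (e3 \in S) => //= _; lra.
- have : ~~ ((e1 \in S) && (e2 \in S)) by apply/negP => /andP [h1 h2]; apply: full.
  by case: (e1 \in S); case: (e2 \in S) => //= _; lra.
Qed.

Lemma bounded_value_le1 pi : bounded p 2 pi -> fwc_pol p f pi <= 1.
Proof.
move=> hb; have supp_i i : Usupp p (phi_i i) by rewrite Usupp_pr phi_in_supp.
have own i : i != e1 -> i \in Epol pi (phi_i i) -> fwc_pol p f pi <= 1.
  move=> ne1 hi; apply: le_trans (fwc_pol_le _ _ (supp_i i)) _.
  by apply: util_own_le1 => //; apply: hb.
have ne21 : e2 != e1 by rewrite eqE.
have ne31 : e3 != e1 by rewrite eqE.
have [hab|h2|h3] := runs_phi2_phi3 pi #|Eit|; last 2 first.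
- exact: own ne21 h2.
- exact: own ne31 h3.
have same : Epol pi (phi_i e2) = Epol pi (phi_i e3) by rewrite /Epol /run hab.
case: (boolP (e2 \in Epol pi (phi_i e2))) => [h2|n2]; first exact: own ne21 h2.
case: (boolP (e3 \in Epol pi (phi_i e3))) => [h3|n3]; first exact: own ne31 h3.
apply: le_trans (fwc_pol_le _ _ (supp_i e2)) _.
by apply: util_unobserved_le1; rewrite // same.
Qed.

End Instance.

Unset Implicit Arguments. Unset Strict Implicit.

Theorem mainTheorem4 (R : realFieldType) (eps : R) :
  0 < eps < 1 ->
  exists p : {ffun Eit -> Ost} -> R,
    [/\ prior_ok p,
        (forall phi, 0 < p phi <-> phi \in [:: phi_i e1; phi_i e2; phi_i e3]),
        [/\ pw_monotone p (util eps), pw_submodular p (util eps),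
            wc_monotone p (util eps), min_dependency p (util eps)
          & ~ wc_submodular p (util eps)],
        (exists pi, is_greedy p (util eps) 2 pi) /\
        (forall pi, is_greedy p (util eps) 2 pi -> fwc_pol p (util eps) pi = eps)
      & (exists pi, bounded p 2 pi /\ fwc_pol p (util eps) pi = 1) /\
        (forall pi, bounded p 2 pi -> fwc_pol p (util eps) pi <= 1)].
Proof.
move=> eps_bounds; exists (pr R); split.
- exact: pr_prior.
- by move=> phi; rewrite pr_gt0.
- split; [exact: util_pw_monotone | exact: util_pw_submodular
         | exact: util_wc_monotone | exact: util_min_dependency
         | exact: util_not_wc_submodular].
- split; first by exists (greedy_pol (pr R) (util eps) 2); apply: greedy_polP.
  by move=> pi; apply: greedy_value.
- split; first by exists e2e3_pol; split; [apply: e2e3_bounded | apply: e2e3_value].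
  exact: bounded_value_le1.
Qed.
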